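(* For every $\Upsilon\in\{\pi,\theta,\theta_B,\theta_{AB},\Psi\}$, the mapping $d_\Upsilon(N_1,N_2)=\frac12\big(|\Upsilon(N_1)\setminus\Upsilon(N_2)|+|\Upsilon(N_2)\setminus\Upsilon(N_1)|\big)$ defines a distance (up to isomorphism) on the class of all tree-child phylogenetic networks labeled in a fixed finite set $S$ in which no pair of parents of a hybrid node is connected by a path; that is, for all such $N_1,N_2,N_3$: $d_\Upsilon(N_1,N_2)\ge0$; $d_\Upsilon(N_1,N_2)=0$ iff $N_1\cong N_2$; $d_\Upsilon(N_1,N_2)=d_\Upsilon(N_2,N_1)$; and $d_\Upsilon(N_1,N_2)\le d_\Upsilon(N_1,N_3)+d_\Upsilon(N_3,N_2)$.
   Context: A DAG $N=(V,E)$ is labeled in $S$ if its leaves (out-degree 0) are bijectively labeled by $S$; $\cong$ means isomorphism of directed graphs preserving leaf labels. A tree node has in-degree at most 1; a hybrid node has in-degree greater than 1; a tree child is a child that is a tree node. A tree-child phylogenetic network is a rooted DAG labeled in $S$ in which every non-leaf node has at least one tree child, no tree node has out-degree 1, and every hybrid node has out-degree exactly 1. ''No pair of parents of a hybrid node is connected by a path'': if $u_1,u_2$ are parents of a hybrid node, there is no path $u_1\rightsquigarrow u_2$ nor $u_2\rightsquigarrow u_1$. For a node $v$: $C(v)$ is the set of descendant leaves; $A(v)$ the set of leaves $s$ such that every path from the root to $s$ contains $v$; $B(v)=C(v)\setminus A(v)$. For an arc $e=(u,v)$: $\pi(e)=(C(v),S\setminus C(v))$; $\theta(e)=(A(v),B(v),S\setminus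 C(v))$; $\theta_B(e)$ is $\theta(e)$ with each $s\in B(v)$ weighted by the maximum number of hybrid nodes on a path from $v$ to $s$ (including $v$ and $s$); $\theta_{AB}(e)$ is $\theta(e)$ with each $s\in A(v)\cup B(v)$ so weighted. An arc is a tree arc if its head is a tree node and a network arc otherwise; for a hybrid node $v$, $RS(v)=\{C(u)\mid u\text{ a parent of }v\}$; $\Psi(e)=\theta_{AB}(e)$ for a tree arc, $\Psi(e)=(\theta(e),RS(v))$ for a network arc with head $v$. For each $\Upsilon$, $\Upsilon(N)=\{\Upsilon(e)\mid e\in E\}$. *)

From mathcomp Require Import all_boot all_order all_algebra.
From mathcomp Require Import boolp.
Set Implicit Arguments. Unset Strict Implicit. Unset Printing Implicit Defensive.
Import Order.TTheory GRing.Theory Num.Theory.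

(* A directed graph on a finite node type, with an injection of the label set
   S into the nodes (meant to be a bijection onto the leaves). *)
Record network (S : finType) := Network {
  node : finType;
  arc : rel node;
  lab : S -> node }.
Arguments node {S} n.
Arguments arc {S} n _ _.
Arguments lab {S} n _.

Section Networks.
Variable S : finType.
Implicit Types N : network S.

Definition indeg N (v : node N) : nat := #|[pred u | arc N u v]|.
Definition outdeg N (v : node N) : nat := #|[pred w | arc N v w]|.
Definition is_leaf N (v : node N) : bool := outdeg v == 0.
Definition tree_node N (v : node N) : bool := indeg v <= 1.
Definition hybrid N (v : node N) : bool := 1 < indeg v.
Definition is_root N (v : node N) : bool := indeg v == 0.

Definition acyclic N : Prop :=
  forall u v : node N, arc N u v -> ~~ connect (arc N) v u.
Definition rooted N : Prop :=
  exists r : node N, is_root r /\ forall v, connect (arc N) r v.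
Definition leaf_labeled N : Prop :=
  injective (lab N) /\ forall v : node N, is_leaf v <-> exists s, lab N s = v.

Definition tree_child_network N : Prop :=
  acyclic N /\ rooted N /\ leaf_labeled N /\
  (forall v : node N, ~~ is_leaf v -> exists w, arc N v w /\ tree_node w) /\
  (forall v : node N, tree_node v -> outdeg v != 1) /\
  (forall v : node N, hybrid v -> outdeg v = 1).

Definition no_connected_parents N : Prop :=
  forall h u1 u2 : node N, hybrid h -> arc N u1 h -> arc N u2 h -> u1 != u2 ->
    ~~ connect (arc N) u1 u2.

Definition admissible N : Prop := tree_child_network N /\ no_connected_parents N.

Definition iso N1 N2 : Prop :=
  exists f : node N1 -> node N2,
    bijective f /\ (forall u v, arc N2 (f u) (f v) = arc N1 u v) /\
    (forall s, f (lab N1 s) = lab N2 s).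

Definition Cset N (v : node N) : {set S} := [set s | connect (arc N) v (lab N s)].
Definition all_paths_through N (v x : node N) : Prop :=
  forall r, is_root r -> forall p : seq (node N),
    path (arc N) r p -> last r p = x -> v \in r :: p.
Definition Aset N (v : node N) : {set S} :=
  [set s | `[< all_paths_through v (lab N s) >]].
Definition Bset N (v : node N) : {set S} := Cset v :\: Aset v.

(* maximum number of hybrid nodes on a path from v to x (v and x included);
   paths with at most #|V| arcs are enumerated, which covers all paths of an
   acyclic network *)
Definition hweight N (v x : node N) : nat :=
  \max_(k < #|node N|.+1)
     \max_(p : k.-tuple (node N) | path (arc N) v p && (last v p == x))
        count (@hybrid N) (v :: p).

Definition weighted N (v : node N) (X : {set S}) : {ffun S -> option nat} :=
  [ffun s => if s \in X then Some (hweight v (lab N s)) else None].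

Inductive upsilon := Upi | Utheta | UthetaB | UthetaAB | UPsi.

Definition wset := {ffun S -> option nat}.

Definition upsilon_val (k : upsilon) : eqType :=
  match k with
  | Upi => ({set S} * {set S})%type
  | Utheta => ({set S} * {set S} * {set S})%type
  | UthetaB => ({set S} * wset * {set S})%type
  | UthetaAB => (wset * wset * {set S})%type
  | UPsi => ((wset * wset * {set S}) + (({set S} * {set S} * {set S}) * {set {set S}}))%type
  end.

Definition compl N (v : node N) : {set S} := ~: Cset v.

Definition RS N (v : node N) : {set {set S}} := [set Cset u | u in [pred u | arc N u v]].

Definition ups (k : upsilon) N (u v : node N) : upsilon_val k :=
  match k return upsilon_val k with
  | Upi => (Cset v, compl v)
  | Utheta => (Aset v, Bset v, compl v)
  | UthetaB => (Aset v, weighted v (Bset v), compl v)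
  | UthetaAB => (weighted v (Aset v), weighted v (Bset v), compl v)
  | UPsi =>
      if tree_node v then inl (weighted v (Aset v), weighted v (Bset v), compl v)
      else inr ((Aset v, Bset v, compl v), RS v)
  end.

Definition ups_set (k : upsilon) N : seq (upsilon_val k) :=
  undup [seq ups k e.1 e.2 | e <- enum [pred e : node N * node N | arc N e.1 e.2]].

Definition card_diff (T : eqType) (X Y : seq T) : nat :=
  size (undup [seq x <- X | x \notin Y]).

Definition dist (k : upsilon) N1 N2 : rat :=
  ((card_diff (ups_set k N1) (ups_set k N2) +
    card_diff (ups_set k N2) (ups_set k N1))%:R / 2)%R.

End Networks.

From Pilot Require Import Defs.
From mathcomp Require Import all_boot all_order all_algebra.
From mathcomp Require Import boolp.
Set Implicit Arguments. Unset Strict Implicit. Unset Printing Implicit Defensive.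
Import Order.TTheory GRing.Theory Num.Theory.

(* Each Upsilon(e), e = (u, v), contains S minus C(v), so Upsilon(N) determines the
   set of clusters of N (the root's cluster being S).  In the networks at hand
   a node is determined by its cluster and by whether it is hybrid: for a tree
   node v, C(v) is included in C(u) iff u is an ancestor of v, and a hybrid node
   shares its cluster with its unique child, which is a tree node.  The arcs are
   read off the Hasse diagram of the clusters: a hybrid node points to the tree
   node with the same cluster, a tree node to the nodes whose cluster it covers,
   and a cluster belongs to a hybrid node iff it has at least two upper covers.
   Hence networks with the same Upsilon-sets are isomorphic, and d_Upsilon, half
   the size of a symmetric difference, satisfies the metric axioms. *)

Section ConnectSteps.
Variables (T : finType) (e : rel T).

Lemma connect_first_step x y :
  connect e x y -> x = y \/ exists2 z, e x z & connect e z y.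
Proof.
move=> /connectP[[|z p] /= + ->]; first by left.
by case/andP=> exz pzp; right; exists z => //; apply/connectP; exists p.
Qed.

Lemma connect_last_step x y :
  connect e x y -> x = y \/ exists2 z, connect e x z & e z y.
Proof.
case/connectP=> p; elim/last_ind: p => [|p z _] /= + ->; first by left.
rewrite rcons_path last_rcons => /andP[pxp ez]; right.
by exists (last x p) => //; apply/connectP; exists p.
Qed.

End ConnectSteps.

Section Covers.
Variable S : finType.
Implicit Types (K : {set {set S}}) (X Y : {set S}).

Definition upper_covers K Y : {set {set S}} :=
  [set X in K | (Y \proper X) && [forall Z in K, ~~ ((Y \proper Z) && (Z \proper X))]].

Definition multi_covered K Y : bool := 1 < #|upper_covers K Y|.

(* The arc relation between node keys (C(v), v is hybrid), see [arc_cover_rel]. *)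
Definition cover_rel K (a b : {set S} * bool) : bool :=
  if a.2 then ~~ b.2 && (a.1 == b.1)
  else (a.1 \in upper_covers K b.1) && (b.2 == multi_covered K b.1).

Definition cover_keys K : {set {set S} * bool} :=
  [set (X, false) | X in K] :|: [set (X, true) | X in K & multi_covered K X].

Lemma multi_coveredT K : multi_covered K setT = false.
Proof.
apply/negP => /card_gt1P[X [_ [+ _ _]]].
by rewrite inE => /and3P[_ + _]; rewrite properE subsetT andbF.
Qed.

End Covers.

Section AdmissibleNetwork.
Variables (S : finType) (N : network S).
Hypothesis HN : admissible N.
Local Notation V := (node N).
Local Notation arc := (Defs.arc N).
Local Notation "x ~> y" := (connect arc x y) (at level 70).

Let acyc : acyclic N. Proof. by case: HN => -[]. Qed.
Let rootedN : rooted N. Proof. by case: HN => -[_ []]. Qed.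
Let labeledN : leaf_labeled N. Proof. by case: HN => -[_ [_ []]]. Qed.
Let tree_child_exists (v : V) : ~~ is_leaf v -> exists w, arc v w /\ tree_node w.
Proof. by case: HN => -[_ [_ [_ [H _]]]] _; apply: H. Qed.
Let tree_outdeg (v : V) : tree_node v -> outdeg v != 1.
Proof. by case: HN => -[_ [_ [_ [_ [H _]]]]] _; apply: H. Qed.
Let hybrid_outdeg (v : V) : hybrid v -> outdeg v = 1.
Proof. by case: HN => -[_ [_ [_ [_ [_ H]]]]] _; apply: H. Qed.
Let parents_unconnected : no_connected_parents N. Proof. by case: HN. Qed.

Lemma hybridNtree (v : V) : hybrid v = ~~ tree_node v.
Proof. by rewrite /hybrid /tree_node ltnNge. Qed.

Lemma treeNhybrid (v : V) : tree_node v = ~~ hybrid v.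
Proof. by rewrite hybridNtree negbK. Qed.

Lemma connect_antisym (x y : V) : x ~> y -> y ~> x -> x = y.
Proof.
move=> xy yx; case: (connect_first_step xy) => // -[z xz zy].
by have := acyc xz; rewrite (connect_trans zy yx).
Qed.

Lemma arc_neq (x y : V) : arc x y -> x != y.
Proof. by move=> xy; apply: contraTneq (acyc xy) => ->; rewrite connect0. Qed.

Lemma tree_parent_uniq (y p q : V) : tree_node y -> arc p y -> arc q y -> p = q.
Proof. by move=> /card_le1_eqP H py qy; apply: H. Qed.

Lemma connect_tree_parent (x y p : V) :
  tree_node y -> arc p y -> x ~> y -> x = y \/ x ~> p.
Proof.
move=> ty py /connect_last_step[->|[z xz zy]]; first by left.
by right; rewrite (tree_parent_uniq ty py zy).
Qed.

Lemma leaf_arcF (v w : V) : is_leaf v -> arc v w = false.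
Proof. by move=> /eqP/card0_eq/(_ w); rewrite inE. Qed.

Lemma leaf_connect (v w : V) : is_leaf v -> v ~> w -> w = v.
Proof. by move=> lv /connect_first_step[//|[z]]; rewrite leaf_arcF. Qed.

Lemma lab_leaf s : is_leaf (lab N s).
Proof. by apply/labeledN.2; exists s. Qed.

Lemma leaf_tree_node (v : V) : is_leaf v -> tree_node v.
Proof. by rewrite treeNhybrid /is_leaf; apply: contraL => /hybrid_outdeg->. Qed.

Lemma tree_node_other_child (v c : V) :
  tree_node v -> arc v c -> exists2 w, arc v w & w != c.
Proof.
move=> tv vc; have: 1 < outdeg v.
  by rewrite ltn_neqAle eq_sym tree_outdeg //=; apply/card_gt0P; exists c.
case/card_gt1P=> x [y [vx vy xy]]; have [xc|] := eqVneq x c; last by exists x.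
by exists y; rewrite // -xc eq_sym.
Qed.

Lemma hybrid_child_uniq (h c d : V) : hybrid h -> arc h c -> arc h d -> c = d.
Proof.
move=> /hybrid_outdeg hh; have: outdeg h <= 1 by rewrite hh.
by move=> /card_le1_eqP H hc hd; apply: H.
Qed.

Lemma hybrid_tree_child (h : V) : hybrid h -> exists c, arc h c /\ tree_node c.
Proof. by move=> hh; apply: tree_child_exists; rewrite /is_leaf hybrid_outdeg. Qed.

Lemma hybrid_parent_tree (h p : V) : hybrid h -> arc p h -> tree_node p.
Proof.
move=> hh ph; apply: contraT; rewrite -hybridNtree => hp.
have [c [pc tc]] := hybrid_tree_child hp.
by move: tc; rewrite (hybrid_child_uniq hp pc ph) treeNhybrid hh.
Qed.

Lemma in_Cset (v : V) s : (s \in Cset v) = (v ~> lab N s).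
Proof. by rewrite inE. Qed.

Lemma Cset_connect (u v : V) : u ~> v -> Cset v \subset Cset u.
Proof. by move=> uv; apply/subsetP => s; rewrite !in_Cset; apply: connect_trans. Qed.

Lemma connect_Cset_properF (u v : V) : u ~> v -> (Cset u \proper Cset v) = false.
Proof.
by move=> uv; apply/negP => /proper_sub_trans/(_ (Cset_connect uv)); rewrite properxx.
Qed.

Lemma Cset_lab s : Cset (lab N s) = [set s].
Proof.
apply/setP => t; rewrite in_Cset inE; apply/idP/eqP => [st|->//].
exact/labeledN.1/(leaf_connect (lab_leaf s)).
Qed.

(* The leaf is reached from [v] along a path of tree nodes, so each of its
   ancestors is either an ancestor of [v] or lies below a tree child of [v]. *)
Lemma tree_path_leaf (v : V) : exists s, v ~> lab N s /\
  forall x, x ~> lab N s -> x ~> v \/ exists c, [/\ arc v c, tree_node c & c ~> x].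
Proof.
have [n] := ubnP #|[pred y | v ~> y]|; elim: n v => // n IHn v lt_v_n.
have [lv|nlv] := boolP (is_leaf v).
  have [s <-] := (labeledN.2 v).1 lv.
  by exists s; split=> // x; left.
have [c [vc tc]] := tree_child_exists nlv.
have lt_c_n : #|[pred y | c ~> y]| < n.
  apply: leq_trans (ltnSE lt_v_n); apply: proper_card; apply/properP; split.
    by apply/subsetP => y; rewrite !inE; apply/connect_trans/connect1.
  by exists v; rewrite !inE ?connect0 ?acyc.
have [s [cs Hs]] := IHn c lt_c_n.
exists s; split=> [|x /Hs[xc|[c' [cc' _ c'x]]]]; first exact: connect_trans (connect1 vc) cs.
  case: (connect_tree_parent tc vc xc) => [->|]; last by left.
  by right; exists c; rewrite connect0.
by right; exists c; split=> //; apply: connect_trans c'x; apply: connect1.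
Qed.

(* Follow the tree path from a second child [w] of [v] to a leaf: if [c]
   reached it, either [w] would be a hybrid node whose parents [v] and [p]
   are connected through [c], or [c] would have the two parents [v] and [w],
   or there would be a cycle. *)
Lemma Cset_not_sub_tree_child (v c : V) :
  tree_node v -> arc v c -> tree_node c -> ~~ (Cset v \subset Cset c).
Proof.
move=> tv vc tc; apply/negP => sub_vc.
have [w vw wNc] := tree_node_other_child tv vc.
have [s [ws Hs]] := tree_path_leaf w.
have cs : c ~> lab N s.
  by rewrite -in_Cset (subsetP sub_vc) // (subsetP (Cset_connect (connect1 vw))) ?in_Cset.
case: (Hs c cs) => [cw | [c' [wc' _ c'c]]].
  case: (connect_last_step cw) => [cw_eq | [p cp pw]]; first by rewrite cw_eq eqxx in wNc.
  have [pv|pNv] := eqVneq p v; first by rewrite pv in cp; have := acyc vc; rewrite cp.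
  have hw : hybrid w.
    by rewrite hybridNtree; apply: contra pNv => tw; rewrite (tree_parent_uniq tw pw vw).
  have := parents_unconnected hw vw pw; rewrite eq_sym pNv => /(_ isT).
  by rewrite (connect_trans (connect1 vc) cp).
case: (connect_tree_parent tc vc c'c) => [c'c_eq|c'v].
  rewrite c'c_eq in wc'; rewrite (tree_parent_uniq tc wc' vc) in vw.
  by have := arc_neq vw; rewrite eqxx.
by have := acyc vw; rewrite (connect_trans (connect1 wc') c'v).
Qed.

Lemma Cset_sub_connect (u v : V) : tree_node v -> Cset v \subset Cset u -> u ~> v.
Proof.
move=> tv sub_vu; have [s [vs Hs]] := tree_path_leaf v.
have us : u ~> lab N s by rewrite -in_Cset (subsetP sub_vu) ?in_Cset.
case: (Hs u us) => // -[c [vc tc cu]].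
by have := Cset_not_sub_tree_child tv vc tc; rewrite (subset_trans sub_vu (Cset_connect cu)).
Qed.

Lemma tree_Cset_inj (u v : V) : tree_node u -> tree_node v -> Cset u = Cset v -> u = v.
Proof.
by move=> tu tv Euv; apply: connect_antisym; apply: Cset_sub_connect; rewrite // Euv.
Qed.

Lemma Cset_hybrid_child (h c : V) : hybrid h -> arc h c -> Cset h = Cset c.
Proof.
move=> hh hc; apply/setP => s; rewrite !in_Cset; apply/idP/idP => [|]; last first.
  exact/connect_trans/connect1.
case/connect_first_step => [hs|[z hz zs]]; last by rewrite (hybrid_child_uniq hh hc hz).
by move: hh; rewrite hs hybridNtree leaf_tree_node ?lab_leaf.
Qed.

Lemma hybrid_Cset_inj (h1 h2 : V) : hybrid h1 -> hybrid h2 -> Cset h1 = Cset h2 -> h1 = h2.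
Proof.
move=> hh1 hh2 E.
have [c1 [hc1 tc1]] := hybrid_tree_child hh1; have [c2 [hc2 tc2]] := hybrid_tree_child hh2.
have Ec : c1 = c2.
  by apply: tree_Cset_inj; rewrite // -(Cset_hybrid_child hh1 hc1) -(Cset_hybrid_child hh2 hc2).
by rewrite Ec in hc1 tc1; apply: tree_parent_uniq tc1 hc1 hc2.
Qed.

Definition key (v : V) : {set S} * bool := (Cset v, hybrid v).

Lemma key_inj : injective key.
Proof.
move=> u v [Euv Ehyb]; have [hu|tu] := boolP (hybrid u).
  by apply: hybrid_Cset_inj; rewrite -?Ehyb.
by apply: tree_Cset_inj; rewrite // treeNhybrid -?Ehyb.
Qed.


Definition clusters : {set {set S}} := [set Cset v | v : V].
Local Notation K := clusters.

Lemma Cset_in_clusters (v : V) : Cset v \in K.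
Proof. exact: imset_f. Qed.

Lemma clustersP X : X \in K -> exists2 t : V, tree_node t & X = Cset t.
Proof.
case/imsetP=> v _ ->; have [tv|hv] := boolP (tree_node v); first by exists v.
rewrite -hybridNtree in hv; have [c [vc tc]] := hybrid_tree_child hv.
by exists c; rewrite // (Cset_hybrid_child hv vc).
Qed.

Lemma Cset_tree_arc_proper (u v : V) :
  tree_node u -> tree_node v -> arc u v -> Cset v \proper Cset u.
Proof.
move=> tu tv uv; rewrite properEneq Cset_connect ?connect1 // andbT.
by apply: contra_neq (arc_neq uv) => /esym; apply: tree_Cset_inj.
Qed.

Lemma proper_Cset_connect_parent (t w p : V) :
  tree_node t -> tree_node w -> Cset t \proper Cset w -> arc p t -> w ~> p.
Proof.
move=> tt tw; rewrite properEneq => /andP[Nwt sub_tw] pt.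
by case: (connect_tree_parent tt pt (Cset_sub_connect tt sub_tw)) => // wt; rewrite wt eqxx in Nwt.
Qed.

Lemma setT_in_clusters : setT \in K.
Proof.
have [r [_ r_all]] := rootedN; apply/imsetP; exists r => //.
by apply/setP => s; rewrite in_Cset inE r_all.
Qed.

Lemma Cset_root_or_parent (t : V) : Cset t = setT \/ exists p, arc p t.
Proof.
have [r [_ r_all]] := rootedN.
case: (connect_last_step (r_all t)) => [<-|[p _ pt]]; last by right; exists p.
by left; apply/setP => s; rewrite in_Cset inE r_all.
Qed.

Lemma upper_covers_tree (t p : V) :
  tree_node t -> tree_node p -> arc p t -> upper_covers K (Cset t) = [set Cset p].
Proof.
move=> tt tp pt; have pr_tp := Cset_tree_arc_proper tp tt pt.
apply/setP => X; rewrite !inE; apply/idP/eqP => [|->].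
  case/and3P=> /clustersP[w tw ->] pr_tw /forall_inP min_w.
  have wp := proper_Cset_connect_parent tt tw pr_tw pt.
  have := min_w _ (Cset_in_clusters p); rewrite pr_tp /= => Npr_pw.
  by apply/eqP; rewrite eq_sym eqEproper Cset_connect.
rewrite Cset_in_clusters pr_tp; apply/forall_inP => _ /clustersP[w tw ->].
apply/negP => /andP[pr_tw].
by rewrite connect_Cset_properF // (proper_Cset_connect_parent tt tw pr_tw pt).
Qed.

(* Minimality of the cover is where no two parents of [h] are connected. *)
Lemma Cset_parent_upper_cover (h p : V) :
  hybrid h -> arc p h -> Cset p \in upper_covers K (Cset h).
Proof.
move=> hh ph; have tp := hybrid_parent_tree hh ph.
have [c [hc tc]] := hybrid_tree_child hh; rewrite (Cset_hybrid_child hh hc).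
rewrite inE Cset_in_clusters /=; apply/andP; split.
  rewrite properEneq Cset_connect ?andbT; last exact: connect_trans (connect1 ph) (connect1 hc).
  by apply: contraNneq (acyc ph) => /(tree_Cset_inj tc tp) <-; apply: connect1.
apply/forall_inP => _ /clustersP[w tw ->]; apply/negP => /andP[pr_cw pr_wp].
have := proper_Cset_connect_parent tc tw pr_cw hc.
case/connect_last_step => [wh|[q wq qh]]; first by move: tw; rewrite wh treeNhybrid hh.
have [qp|Nqp] := eqVneq q p; first by rewrite connect_Cset_properF -?qp in pr_wp.
have pw := Cset_sub_connect tw (proper_sub pr_wp).
have := parents_unconnected hh ph qh; rewrite eq_sym Nqp => /(_ isT).
by rewrite (connect_trans pw wq).
Qed.

Lemma multi_covered_hybrid (h : V) : hybrid h -> multi_covered K (Cset h).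
Proof.
move=> hh; have /card_gt1P[p [q [ph qh Npq]]] := hh; rewrite !inE in ph qh.
apply/card_gt1P; exists (Cset p), (Cset q); rewrite !Cset_parent_upper_cover //.
split=> //; apply: contra_neq Npq.
by apply: tree_Cset_inj; apply: hybrid_parent_tree hh _.
Qed.

Lemma codom_key : codom key =i cover_keys K.
Proof.
move=> -[X b]; apply/codomP/idP => [[v [-> ->]]|].
  rewrite !inE; have [hv|hNv] := boolP (hybrid v); apply/orP; [right|left].
    by apply/imsetP; exists (Cset v); rewrite // inE Cset_in_clusters multi_covered_hybrid.
  by apply/imsetP; exists (Cset v); rewrite ?Cset_in_clusters.
rewrite inE => /orP[/imsetP[_ /clustersP[t tt ->] [-> ->]]|].
  by exists t; rewrite // /key hybridNtree tt.
case/imsetP=> Y /[!inE] /andP[/clustersP[t tt ->] multi_t] [-> ->].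
case: (Cset_root_or_parent t) => [tT|[p pt]]; first by rewrite tT multi_coveredT in multi_t.
have [hp|tp] := boolP (hybrid p); first by exists p; rewrite // /key hp (Cset_hybrid_child hp pt).
by move: multi_t; rewrite /multi_covered (upper_covers_tree tt _ pt) ?cards1 ?treeNhybrid.
Qed.

Lemma arc_from_hybrid (u v : V) : hybrid u -> arc u v = ~~ hybrid v && (Cset u == Cset v).
Proof.
move=> hu; have [c [uc tc]] := hybrid_tree_child hu.
apply/idP/idP => [uv|/andP[hNv /eqP Euv]].
  by rewrite -(hybrid_child_uniq hu uc uv) -treeNhybrid tc (Cset_hybrid_child hu uc) eqxx.
rewrite (Cset_hybrid_child hu uc) in Euv.
have tv : tree_node v by rewrite treeNhybrid.
by rewrite -(tree_Cset_inj tc tv Euv).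
Qed.

Lemma upper_cover_arc (u v : V) : tree_node u -> Cset u \in upper_covers K (Cset v) ->
  hybrid v = multi_covered K (Cset v) -> arc u v.
Proof.
move=> tu cov hv_multi; move: (cov); rewrite inE => /and3P[_ pr_vu /forall_inP min_u].
have [hv|] := boolP (hybrid v).
  have [c [vc tc]] := hybrid_tree_child hv.
  have pr_cu : Cset c \proper Cset u by rewrite -(Cset_hybrid_child hv vc).
  case/connect_last_step: (proper_Cset_connect_parent tc tu pr_cu vc) => [uv|[q uq qv]].
    by move: tu; rewrite uv treeNhybrid hv.
  have [<- //|Nqu] := eqVneq q u.
  have pr_qu : Cset q \proper Cset u.
    rewrite properEneq Cset_connect // andbT; apply: contra_neq Nqu.
    by apply: tree_Cset_inj (hybrid_parent_tree hv qv) tu.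
  have := Cset_parent_upper_cover hv qv; rewrite inE => /and3P[_ pr_vq _].
  by have := min_u _ (Cset_in_clusters q); rewrite pr_vq pr_qu.
rewrite -treeNhybrid => tv.
case/connect_last_step: (Cset_sub_connect tv (proper_sub pr_vu)) => [uv|[p _ pv]].
  by rewrite uv properxx in pr_vu.
have [hp|tp] := boolP (hybrid p).
  by move: hv_multi; rewrite -(Cset_hybrid_child hp pv) multi_covered_hybrid // hybridNtree tv.
move: cov; rewrite -treeNhybrid in tp; rewrite (upper_covers_tree tv tp pv) inE.
by move=> /eqP/(tree_Cset_inj tu tp) ->.
Qed.

Lemma arc_cover_rel (u v : V) : arc u v = cover_rel K (key u) (key v).
Proof.
rewrite /cover_rel /=; case: ifP => [hu|/negbT]; first exact: arc_from_hybrid.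
rewrite -treeNhybrid => tu.
apply/idP/andP => [uv|[cov /eqP]]; last exact: upper_cover_arc.
have [hv|hNv] := boolP (hybrid v).
  by rewrite Cset_parent_upper_cover ?multi_covered_hybrid.
rewrite -treeNhybrid in hNv.
by rewrite /multi_covered (upper_covers_tree hNv tu uv) cards1 set11.
Qed.

Lemma key_lab s : key (lab N s) = ([set s], false).
Proof. by rewrite /key Cset_lab hybridNtree leaf_tree_node ?lab_leaf. Qed.

End AdmissibleNetwork.

Lemma eq_codom_bij (T1 T2 : finType) (R : eqType) (k1 : T1 -> R) (k2 : T2 -> R) :
  injective k1 -> injective k2 -> codom k1 =i codom k2 ->
  exists2 f : T1 -> T2, bijective f & forall x, k2 (f x) = k1 x.
Proof.
move=> k1_inj k2_inj E.
have k1_in x : k1 x \in codom k2 by rewrite -E codom_f.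
have k2_in y : k2 y \in codom k1 by rewrite E codom_f.
exists (fun x => iinv (k1_in x)); last by move=> x; rewrite f_iinv.
by exists (fun y => iinv (k2_in y)) => [x|y]; [apply: k1_inj | apply: k2_inj]; rewrite !f_iinv.
Qed.

Lemma hweight_le_map (S : finType) (N1 N2 : network S) (f : node N1 -> node N2) :
  (forall u v, Defs.arc N1 u v -> Defs.arc N2 (f u) (f v)) ->
  (forall v, hybrid (f v) = hybrid v) -> #|node N1| <= #|node N2| ->
  forall v x, hweight v x <= hweight (f v) (f x).
Proof.
move=> arc_f hybrid_f le_card v x; apply/bigmax_leqP => k _.
apply/bigmax_leqP => p /andP[vp /eqP px].
have lt_k : k < #|node N2|.+1 by rewrite ltnS (leq_trans _ le_card) // -ltnS ltn_ord.
apply: leq_trans (leq_bigmax (Ordinal lt_k)).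
have fp : path (Defs.arc N2) (f v) (map f p) && (last (f v) (map f p) == f x).
  by rewrite last_map px eqxx andbT path_map; apply: sub_path vp.
apply: leq_trans (leq_bigmax_cond (map_tuple f p) fp); rewrite -map_cons count_map.
by apply/eq_leq/eq_count => w /=; rewrite hybrid_f.
Qed.

Section IsoInvariance.
Variables (S : finType) (N1 N2 : network S).
Variables (f : node N1 -> node N2) (g : node N2 -> node N1).
Hypotheses (fK : cancel f g) (gK : cancel g f).
Hypothesis arc_f : forall u v, Defs.arc N2 (f u) (f v) = Defs.arc N1 u v.
Hypothesis lab_f : forall s, f (lab N1 s) = lab N2 s.

Let f_inj : injective f. Proof. exact: can_inj fK. Qed.

Lemma path_iso x p : path (Defs.arc N2) (f x) (map f p) = path (Defs.arc N1) x p.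
Proof. by rewrite path_map; apply: eq_path => a b /=. Qed.

Lemma connect_iso x y : connect (Defs.arc N2) (f x) (f y) = connect (Defs.arc N1) x y.
Proof.
apply/connectP/connectP => [[p2 + fy]|[p + y_last]].
  rewrite -(mapK gK p2) path_iso => p_path; exists (map g p2) => //.
  by apply: f_inj; rewrite fy -(last_map f) (mapK gK).
by rewrite -path_iso => fp; exists (map f p); rewrite // last_map y_last.
Qed.

Lemma indeg_iso v : indeg (f v) = indeg v.
Proof.
rewrite /indeg -(card_image f_inj); apply: eq_card => w; rewrite !inE.
by rewrite -{2}[w]gK (mem_image f_inj) inE -arc_f gK.
Qed.

Lemma tree_node_iso v : tree_node (f v) = tree_node v. Proof. by rewrite /tree_node indeg_iso. Qed.
Lemma hybrid_iso v : hybrid (f v) = hybrid v. Proof. by rewrite /hybrid indeg_iso. Qed.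
Lemma is_root_iso v : is_root (f v) = is_root v. Proof. by rewrite /is_root indeg_iso. Qed.

Lemma Cset_iso v : Cset (f v) = Cset v.
Proof. by apply/setP => s; rewrite !inE -lab_f connect_iso. Qed.

Lemma all_paths_through_iso v x : all_paths_through (f v) (f x) <-> all_paths_through v x.
Proof.
split=> through r root_r p.
  rewrite -path_iso => p_path p_last; rewrite -(mem_map f_inj).
  by apply: through; rewrite ?is_root_iso // last_map p_last.
rewrite -(gK r) -(mapK gK p) path_iso last_map => p_path /f_inj p_last.
by rewrite -map_cons mem_map //; apply: through; rewrite // -is_root_iso gK.
Qed.

Lemma Aset_iso v : Aset (f v) = Aset v.
Proof. by apply/setP => s; rewrite !inE -lab_f; apply/asbool_equiv_eq/all_paths_through_iso. Qed.

Lemma hweight_iso v x : hweight (f v) (f x) = hweight v x.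
Proof.
have arc_g a b : Defs.arc N1 (g a) (g b) = Defs.arc N2 a b by rewrite -arc_f !gK.
have hybrid_g w : hybrid (g w) = hybrid w by rewrite -hybrid_iso gK.
apply/eqP; rewrite eqn_leq; apply/andP; split.
  rewrite -{2}(fK v) -{2}(fK x).
  apply: (hweight_le_map _ hybrid_g (@leq_card _ _ g (can_inj gK))).
  by move=> a b; rewrite arc_g.
apply: (hweight_le_map _ hybrid_iso (@leq_card _ _ f f_inj)).
by move=> a b; rewrite arc_f.
Qed.

Lemma weighted_iso v X : weighted (f v) X = weighted v X.
Proof. by apply/ffunP => s; rewrite !ffunE -lab_f hweight_iso. Qed.

Lemma RS_iso v : RS (f v) = RS v.
Proof.
apply/setP => X; apply/imsetP/imsetP => [[w wv ->]|[u uv ->]].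
  by exists (g w); rewrite -?Cset_iso ?gK // inE -arc_f gK.
by exists (f u); rewrite ?Cset_iso // inE arc_f.
Qed.

Lemma ups_iso k u v : ups k (f u) (f v) = ups k u v.
Proof.
by case: k; rewrite /= /compl /Bset ?tree_node_iso ?RS_iso ?weighted_iso ?Cset_iso ?Aset_iso.
Qed.

Lemma ups_set_sub_iso k : {subset ups_set k N1 <= ups_set k N2}.
Proof.
move=> y; rewrite !mem_undup => /mapP[[u v] uv ->]; apply/mapP.
by exists (f u, f v); rewrite /= ?ups_iso // mem_enum inE /= arc_f; rewrite mem_enum in uv.
Qed.

End IsoInvariance.

Lemma iso_ups_set_sub (S : finType) k (N1 N2 : network S) :
  iso N1 N2 -> {subset ups_set k N1 <= ups_set k N2}.
Proof. case=> f [[g fK gK] [arc_f lab_f]]; exact: (ups_set_sub_iso fK gK arc_f lab_f). Qed.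

Lemma iso_sym (S : finType) (N1 N2 : network S) : iso N1 N2 -> iso N2 N1.
Proof.
case=> f [[g fK gK] [arc_f lab_f]]; exists g; split; first by exists f.
by split=> [u v|s]; rewrite -?arc_f -?lab_f ?gK ?fK.
Qed.

Section CardDiff.
Variable T : eqType.
Implicit Types X Y Z : seq T.

Lemma card_diff_eq0 X Y : card_diff X Y = 0 <-> {subset X <= Y}.
Proof.
rewrite /card_diff; split=> [/size0nil XY0 x Xx|XY].
  apply: contraT => xNY.
  by have := mem_undup [seq y <- X | y \notin Y] x; rewrite XY0 mem_filter xNY Xx.
by rewrite (@eq_in_filter _ _ pred0) ?filter_pred0 // => x /XY ->.
Qed.

Lemma card_diff_triangle X Y Z : card_diff X Y <= card_diff X Z + card_diff Z Y.
Proof.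
rewrite /card_diff -size_cat; apply: uniq_leq_size; first exact: undup_uniq.
move=> x; rewrite mem_cat !mem_undup !mem_filter => /andP[xNY xX].
by case: (boolP (x \in Z)) => xZ; rewrite ?xNY ?xX ?orbT.
Qed.

End CardDiff.

Section Distance.
Variables (S : finType) (k : upsilon).
Implicit Types N : network S.
Local Open Scope ring_scope.

Lemma dist_ge0 N1 N2 : 0 <= dist k N1 N2.
Proof. by rewrite /dist divr_ge0 ?ler0n. Qed.

Lemma dist_sym N1 N2 : dist k N1 N2 = dist k N2 N1.
Proof. by rewrite /dist addnC. Qed.

Lemma dist_triangle N1 N2 N3 : dist k N1 N2 <= dist k N1 N3 + dist k N3 N2.
Proof.
rewrite /dist -mulrDl -natrD ler_wpM2r ?invr_ge0 ?ler0n // ler_nat addnACA.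
by rewrite leq_add ?card_diff_triangle // addnC card_diff_triangle.
Qed.

Lemma dist_eq0 N1 N2 : dist k N1 N2 = 0 <->
  {subset ups_set k N1 <= ups_set k N2} /\ {subset ups_set k N2 <= ups_set k N1}.
Proof.
rewrite -!card_diff_eq0 /dist; split=> [/eqP|[-> ->]]; last by rewrite mul0r.
by rewrite mulf_eq0 invr_eq0 pnatr_eq0 orbF addn_eq0 => /andP[/eqP-> /eqP->].
Qed.

End Distance.

Definition ups_compl (S : finType) (k : upsilon) : upsilon_val S k -> {set S} :=
  match k return upsilon_val S k -> {set S} with
  | Upi | Utheta | UthetaB | UthetaAB => fun x => x.2
  | UPsi => fun x => match x with inl y => y.2 | inr y => y.1.2 end
  end.

Lemma ups_complE (S : finType) k (N : network S) (u v : node N) :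
  ups_compl (ups k u v) = compl v.
Proof. by case: k => //=; case: (tree_node v). Qed.

Lemma ups_in_ups_set (S : finType) k (N : network S) (u v : node N) :
  Defs.arc N u v -> ups k u v \in ups_set k N.
Proof. by move=> uv; rewrite mem_undup; apply/mapP; exists (u, v); rewrite ?mem_enum. Qed.

Lemma ups_set_sub_clusters (S : finType) k (N1 N2 : network S) :
  admissible N1 -> admissible N2 -> {subset ups_set k N1 <= ups_set k N2} ->
  clusters N1 \subset clusters N2.
Proof.
move=> HN1 HN2 sub12; apply/subsetP => _ /imsetP[v _ ->].
case: (Cset_root_or_parent HN1 v) => [->|[u uv]]; first exact: setT_in_clusters.
have := sub12 _ (ups_in_ups_set k uv); rewrite mem_undup => /mapP[[u' v'] _].
move=> /(congr1 (@ups_compl S k)); rewrite !ups_complE => /setC_inj ->.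
exact: Cset_in_clusters.
Qed.

Lemma clusters_iso (S : finType) (N1 N2 : network S) :
  admissible N1 -> admissible N2 -> clusters N1 = clusters N2 -> iso N1 N2.
Proof.
move=> HN1 HN2 EK.
have Ekey : codom (@key S N1) =i codom (@key S N2).
  by move=> a; rewrite !codom_key // EK.
have [f bij_f key_f] := eq_codom_bij (key_inj HN1) (key_inj HN2) Ekey.
exists f; split=> //; split=> [u v|s]; first by rewrite !arc_cover_rel // !key_f EK.
by apply: (key_inj HN2); rewrite key_f !key_lab.
Qed.

Local Open Scope ring_scope.

Theorem corollary10 (S : finType) (k : upsilon) (N1 N2 N3 : network S) :
  admissible N1 -> admissible N2 -> admissible N3 ->
  [/\ 0 <= dist k N1 N2,
      dist k N1 N2 = 0 <-> iso N1 N2,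
      dist k N1 N2 = dist k N2 N1 &
      dist k N1 N2 <= dist k N1 N3 + dist k N3 N2].
Proof.
move=> HN1 HN2 _; split; [exact: dist_ge0 | | exact: dist_sym | exact: dist_triangle].
rewrite dist_eq0; split=> [[sub12 sub21]|iso12].
  apply: clusters_iso => //; apply/eqP; rewrite eqEsubset.
  by rewrite (ups_set_sub_clusters HN1 HN2 sub12) (ups_set_sub_clusters HN2 HN1 sub21).
by split; apply: iso_ups_set_sub; last apply: iso_sym.
Qed.
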